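(* Let $G$ be a finite simple graph such that $\mathrm{mur}(G)$ is attained by a universal adjacency matrix $\alpha A_G+\beta I+\gamma J+\delta D_G$ of $G$ with $\delta=0$. Then for every induced subgraph $H$ of $G$, $\mathrm{mur}(H)\le\mathrm{mur}(G)$.
   Context: For a finite simple undirected graph $G$ on vertices $v_1,\dots,v_n$, let $A_G$ be its $(0,1)$-adjacency matrix, $D_G=\mathrm{diag}(d_1,\dots,d_n)$ with $d_i$ the degree of $v_i$, $I$ the $n\times n$ identity matrix and $J$ the $n\times n$ all-ones matrix. A universal adjacency matrix of $G$ is any matrix $\alpha A_G+\beta I+\gamma J+\delta D_G$ with real scalars $\alpha,\beta,\gamma,\delta$ and $\alpha\neq 0$. The minimum universal rank $\mathrm{mur}(G)$ is the minimum rank over all universal adjacency matrices of $G$. *)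

From HB Require Import structures.
From mathcomp Require Import all_boot all_order all_algebra.
From mathcomp Require Import boolp reals.
Set Implicit Arguments. Unset Strict Implicit. Unset Printing Implicit Defensive.
Import Order.TTheory GRing.Theory Num.Theory.
Local Open Scope ring_scope.

(* A graph on vertex set 'I_n is given by an adjacency relation e : rel 'I_n
   (assumed symmetric and irreflexive where it matters). *)

Definition adjmx (R : realType) (n : nat) (e : rel 'I_n) : 'M[R]_n :=
  \matrix_(i, j) (e i j)%:R.

Definition degree (n : nat) (e : rel 'I_n) (i : 'I_n) : nat :=
  #|[set j | e i j]|.

Definition degmx (R : realType) (n : nat) (e : rel 'I_n) : 'M[R]_n :=
  diag_mx (\row_i (degree e i)%:R).

Definition univmx (R : realType) (n : nat) (e : rel 'I_n) (a b c d : R) : 'M[R]_n :=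
  a *: adjmx R e + b%:M + c *: const_mx 1 + d *: degmx R e.

Definition has_univ_rank (R : realType) (n : nat) (e : rel 'I_n) (r : nat) : bool :=
  `[< exists a b c d : R, a != 0 /\ \rank (univmx e a b c d) = r >].

Lemma has_univ_rank_ex (R : realType) (n : nat) (e : rel 'I_n) :
  exists r, @has_univ_rank R n e r.
Proof.
exists (\rank (@univmx R n e 1 0 0 0)); apply/asboolP.
by exists 1, 0, 0, 0; split => //; exact: oner_neq0.
Qed.

Definition mur (R : realType) (n : nat) (e : rel 'I_n) : nat :=
  ex_minn (has_univ_rank_ex R e).

(* induced subgraph on the image of an injective map f : 'I_m -> 'I_n *)
Definition induced (n m : nat) (e : rel 'I_n) (f : 'I_m -> 'I_n) : rel 'I_m :=
  fun i j => e (f i) (f j).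

From HB Require Import structures.
From mathcomp Require Import all_boot all_order all_algebra.
From mathcomp Require Import boolp reals.
Import Order.TTheory GRing.Theory Num.Theory.
Local Open Scope ring_scope.

Lemma mxrank_mxsub {F : fieldType} {m1 m2 n1 n2}
    (f : 'I_m2 -> 'I_m1) (g : 'I_n2 -> 'I_n1) (A : 'M[F]_(m1, n1)) :
  (\rank (mxsub f g A) <= \rank A)%N.
Proof.
rewrite mxsubcr -mxrank_tr trmx_mxsub.
apply: (leq_trans (mxrankS (rowsub_sub _ _))).
by rewrite mxrank_tr; exact: mxrankS (rowsub_sub _ _).
Qed.

Lemma mur_min {R : realType} {n} {e : rel 'I_n} {r : nat} :
  has_univ_rank R e r -> (mur R e <= r)%N.
Proof. by rewrite /mur; case: ex_minnP => k _; apply. Qed.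

(* Without the degree term, a universal adjacency matrix of an induced subgraph
   is a principal submatrix of the same combination for the whole graph; the
   degree matrix has no such property. *)
Lemma univmx_induced {R : realType} {n m} (e : rel 'I_n) (f : 'I_m -> 'I_n)
    (a b c : R) :
  injective f -> univmx (induced e f) a b c 0 = mxsub f f (univmx e a b c 0).
Proof.
move=> f_inj; apply/matrixP => i j.
by rewrite !mxE /induced (inj_eq f_inj) !mul0r.
Qed.

Theorem theorem23 (R : realType) (n : nat) (e : rel 'I_n)
  (e_sym : symmetric e) (e_irr : irreflexive e)
  (hG : exists a b c : R, a != 0 /\ \rank (univmx e a b c 0) = mur R e) :
  forall (m : nat) (f : 'I_m -> 'I_n), injective f ->
    (mur R (induced e f) <= mur R e)%N.
Proof.
move=> m f f_inj; case: hG => a [b [c [a_neq0 <-]]].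
have induced_rank :
    has_univ_rank R (induced e f) (\rank (univmx (induced e f) a b c 0)).
  by apply/asboolP; exists a, b, c, 0.
apply: leq_trans (mur_min induced_rank) _.
by rewrite univmx_induced //; exact: mxrank_mxsub.
Qed.
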